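(* Let $G$ be a finite group and $p$ a prime dividing $|G|$. If the Sylow $p$-subgroups of $G$ are abelian, then $\mathcal{B}_p(G)\subseteq\mathcal{S}_p(G)$ is a strong deformation retract. Moreover, it is an equivariant strong deformation retract of $\mathcal{S}_p(G)$.
   Context: $\mathcal{S}_p(G)$ is the poset of non-trivial $p$-subgroups of $G$ ordered by inclusion, with $G$ acting by conjugation; $\mathcal{B}_p(G)=\{P\in\mathcal{S}_p(G):P=\mathcal{O}_p(N_G(P))\}$, where $\mathcal{O}_p(H)$ is the largest normal $p$-subgroup of $H$. Finite posets are regarded as finite $T_0$ spaces whose open sets are the down-sets; strong deformation retract refers to this topology, and equivariant means the retraction and homotopy are $G$-equivariant. *)

From HB Require Import structures.
From Stdlib Require Import Reals.
From mathcomp Require Import all_boot all_fingroup all_solvable.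

Set Implicit Arguments.
Unset Strict Implicit.
Unset Printing Implicit Defensive.

(* A finite poset is a subset X of a finite type T with order [le];
   its open sets are the down-sets of X. *)
Definition is_open_in (T : finType) (le : rel T) (X U : {set T}) : Prop :=
  U \subset X /\
  forall x y, x \in U -> y \in X -> le y x -> y \in U.

Definition fcontinuous (T : finType) (le : rel T) (X Y : {set T}) (f : T -> T)
  : Prop :=
  (forall x, x \in X -> f x \in Y) /\
  forall V, is_open_in le Y V -> is_open_in le X [set x in X | f x \in V].

Definition unit_interval (t : R) : Prop := Rle (IZR 0) t /\ Rle t (IZR 1).

(* Since the
   minimal open neighbourhood of x in X is the down-set of x, a set W is open
   in X x [0,1] iff every (x,t) in W has a neighbourhood
   (down-set of x) x ((t-eps,t+eps) cap [0,1]) contained in W. *)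
Definition homotopy_continuous (T : finType) (le : rel T) (X : {set T})
  (H : T -> R -> T) : Prop :=
  (forall x t, x \in X -> unit_interval t -> H x t \in X) /\
  forall V, is_open_in le X V ->
    forall x t, x \in X -> unit_interval t -> H x t \in V ->
      exists eps : R, Rlt (IZR 0) eps /\
        forall y s, y \in X -> le y x -> unit_interval s ->
          Rlt (Rabs (Rminus s t)) eps -> H y s \in V.

Definition strong_deformation_retract (T : finType) (le : rel T)
  (X A : {set T}) : Prop :=
  A \subset X /\
  exists r : T -> T,
    fcontinuous le X A r /\ (forall a, a \in A -> r a = a) /\
    exists H : T -> R -> T,
      homotopy_continuous le X H /\
      (forall x, x \in X -> H x (IZR 0) = x) /\
      (forall x, x \in X -> H x (IZR 1) = r x) /\
      (forall a t, a \in A -> unit_interval t -> H a t = a).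

Definition equivariant_sdr (T : finType) (le : rel T) (X A : {set T})
  (gT : finGroupType) (G : {set gT}) (act : T -> gT -> T) : Prop :=
  A \subset X /\
  exists r : T -> T,
    fcontinuous le X A r /\ (forall a, a \in A -> r a = a) /\
    (forall x g, x \in X -> g \in G -> r (act x g) = act (r x) g) /\
    exists H : T -> R -> T,
      homotopy_continuous le X H /\
      (forall x, x \in X -> H x (IZR 0) = x) /\
      (forall x, x \in X -> H x (IZR 1) = r x) /\
      (forall a t, a \in A -> unit_interval t -> H a t = a) /\
      (forall x g t, x \in X -> g \in G -> unit_interval t ->
         H (act x g) t = act (H x t) g).

Definition subset_le (gT : finGroupType) : rel {set gT} :=
  fun A B => A \subset B.

Definition Sp (gT : finGroupType) (p : nat) (G : {set gT}) : {set {set gT}} :=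
  [set H : {set gT} | [&& group_set H, H \subset G, pgroup p H & (H != 1)%g]].

Definition Bp (gT : finGroupType) (p : nat) (G : {set gT}) : {set {set gT}} :=
  [set H in Sp p G | H == 'O_p('N_G(H))%g].

Definition conj_act (gT : finGroupType) (H : {set gT}) (g : gT) : {set gT} :=
  (H :^ g)%g.

From Stdlib Require Import Reals Lra.
From mathcomp Require Import all_boot all_fingroup all_solvable.

Set Implicit Arguments.
Unset Strict Implicit.
Unset Printing Implicit Defensive.

(* With abelian Sylow p-subgroups, r(P) := O_p(C_G(P)) contains P, is
   monotone, lands in B_p(G), fixes B_p(G) and commutes with conjugation:
   every p-subgroup containing P lies in an abelian Sylow subgroup, hence
   centralises P.  In a finite T0 space a monotone retraction r with x <= r x
   is a strong deformation retraction, via the homotopy that is the identity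
   on [0,1) and r at 1: the open sets are down-sets, so jumping up to r x at
   the end of the interval is continuous. *)

Lemma monotone_fcontinuous (T : finType) (le : rel T) (X Y : {set T})
    (f : T -> T) :
  {in X, forall x, f x \in Y} -> {in X &, {homo f : x y / le x y}} ->
  fcontinuous le X Y f.
Proof.
move=> fXY f_mono; split=> // V [_ V_down]; split.
  by apply/subsetP=> x; rewrite inE => /andP[].
move=> x y; rewrite !inE => /andP[xX fxV] yX le_yx; rewrite yX /=.
by apply: (V_down (f x)); [| apply: fXY | apply: f_mono].
Qed.

Section InflationaryRetraction.

Local Open Scope R_scope.

Variables (T : finType) (le : rel T) (X A : {set T}) (r : T -> T).
Hypotheses (sAX : A \subset X) (r_into : {in X, forall x, r x \in A})
  (r_id : {in A, forall a, r a = a})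
  (r_mono : {in X &, {homo r : x y / le x y}})
  (r_infl : {in X, forall x, le x (r x)}).

Definition jump_homotopy (x : T) (t : R) : T :=
  if Rlt_dec t 1 is left _ then x else r x.

Lemma jump_homotopy_continuous : homotopy_continuous le X jump_homotopy.
Proof.
have rX x : x \in X -> r x \in X by move/r_into/(subsetP sAX).
rewrite /jump_homotopy; split=> [x t xX _|V [_ V_down] x t xX _].
  by case: (Rlt_dec t 1) => // _; apply: rX.
case: (Rlt_dec t 1) => [t_lt1 xV|_ rxV].
  exists (1 - t); split=> [|y s yX le_yx _ st]; first lra.
  case: (Rlt_dec s 1) => [_|]; first exact: (V_down x).
  by have := Rle_abs (s - t); lra.
exists 1; split=> [|y s yX le_yx _ _]; first lra.
have xV : x \in V by apply: (V_down (r x)) => //; apply: r_infl.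
case: (Rlt_dec s 1) => _; first exact: (V_down x).
by apply: (V_down (r x)); rewrite ?rX ?r_mono.
Qed.

Lemma jump_homotopy0 x : jump_homotopy x 0 = x.
Proof. by rewrite /jump_homotopy; case: Rlt_dec => // ?; lra. Qed.

Lemma jump_homotopy1 x : jump_homotopy x 1 = r x.
Proof. by rewrite /jump_homotopy; case: Rlt_dec => // ?; lra. Qed.

Lemma jump_homotopy_id a t : a \in A -> jump_homotopy a t = a.
Proof. by move=> aA; rewrite /jump_homotopy; case: Rlt_dec => // _; apply: r_id. Qed.

Lemma inflationary_retraction_equivariant_sdr (gT : finGroupType) (G : {set gT})
    (act : T -> gT -> T) :
  (forall x g, x \in X -> g \in G -> r (act x g) = act (r x) g) ->
  equivariant_sdr le X A G act.
Proof.
move=> r_equiv; split=> //; exists r.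
split; first exact: monotone_fcontinuous.
do 2!split=> //; exists jump_homotopy.
split; first exact: jump_homotopy_continuous.
split=> [x _|]; first exact: jump_homotopy0.
split=> [x _|]; first exact: jump_homotopy1.
split=> [a t aA _|x g t xX gG _]; first exact: jump_homotopy_id.
by rewrite /jump_homotopy; case: Rlt_dec => // _; apply: r_equiv.
Qed.

End InflationaryRetraction.

Lemma equivariant_sdr_sdr (T : finType) (le : rel T) (X A : {set T})
    (gT : finGroupType) (G : {set gT}) (act : T -> gT -> T) :
  equivariant_sdr le X A G act -> strong_deformation_retract le X A.
Proof.
move=> [sAX [r [r_cont [r_id [_ [H [H_cont [H0 [H1 [H_id _]]]]]]]]]].
by split=> //; exists r; do 2!split=> //; exists H.
Qed.

Section AbelianSylowRetraction.

Local Open Scope group_scope.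

Variables (gT : finGroupType) (G : {group gT}) (p : nat).
Hypothesis abelian_Syl : forall S : {group gT}, S \in 'Syl_p(G) -> abelian S.

Definition pcore_cent (P : {set gT}) : {set gT} := 'O_p('C_G(P)).
Canonical pcore_cent_group (P : {set gT}) := [group of pcore_cent P].

Lemma SpP (x : {set gT}) :
  x \in Sp p G -> exists P : {group gT}, [/\ x = P, p.-subgroup(G) P & P :!=: 1].
Proof. by rewrite inE => /and4P[gx sxG px ntx]; exists (Group gx); rewrite /psubgroup sxG. Qed.

Lemma pcore_subG_psubgroup (H : {group gT}) : p.-subgroup(G) 'O_p(G :&: H).
Proof. by rewrite /psubgroup pcore_pgroup (subset_trans (pcore_sub _ _)) ?subsetIl. Qed.

Lemma pcore_cent_max (P : {set gT}) (K : {group gT}) :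
  p.-group K -> K \subset 'C_G(P) -> 'C_G(P) \subset 'N(K) -> K \subset pcore_cent P.
Proof. by move=> pK sKC nKC; apply: pcore_max; rewrite // /normal sKC. Qed.

Lemma cent_psubgroup (R : {group gT}) (A B : {set gT}) :
  p.-subgroup(G) R -> A \subset R -> B \subset R -> A \subset 'C(B).
Proof.
case/andP=> sRG pR sAR sBR; have [S sylS sRS] := Sylow_superset sRG pR.
have abS : abelian S by apply: abelian_Syl; rewrite inE.
by apply: sub_abelian_cent2 abS _ _; apply: subset_trans sRS.
Qed.

Lemma sub_pcore_cent (P : {group gT}) : p.-subgroup(G) P -> P \subset pcore_cent P.
Proof.
move=> psubP; have /andP[sPG pP] := psubP; apply: pcore_cent_max => //.
  by rewrite subsetI sPG (cent_psubgroup psubP).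
exact: subset_trans (subsetIr _ _) (cent_sub _).
Qed.

Lemma pcore_cent_sub_Sylow (P S : {group gT}) :
  S \in 'Syl_p(G) -> P \subset S -> pcore_cent P \subset S.
Proof.
move=> sylS sPS; have abS := abelian_Syl sylS; rewrite inE in sylS.
have sSC : S \subset 'C_G(P) by rewrite subsetI (pHall_sub sylS) sub_abelian_cent.
exact: pcore_sub_Hall (pHall_subl sSC (subsetIl _ _) sylS).
Qed.

Lemma pcore_cent_mono (P Q : {group gT}) :
  p.-subgroup(G) Q -> P \subset Q -> pcore_cent P \subset pcore_cent Q.
Proof.
case/andP=> sQG pQ sPQ; have [S sylS sQS] := Sylow_superset sQG pQ.
have psubS : p.-subgroup(G) S by rewrite /psubgroup (pHall_sub sylS) (pHall_pgroup sylS).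
have sRS : pcore_cent P \subset S by rewrite pcore_cent_sub_Sylow ?inE ?(subset_trans sPQ).
have /andP[sRG pR] := pcore_subG_psubgroup 'C(P).
apply: pcore_cent_max => //; first by rewrite subsetI sRG (cent_psubgroup psubS).
exact: subset_trans (setIS G (centS sPQ)) (gFnorm _ _).
Qed.

Lemma pcore_cent_Bp (P : {group gT}) :
  p.-subgroup(G) P -> P :!=: 1 -> pcore_cent P \in Bp p G.
Proof.
move=> psubP ntP; set Q := pcore_cent P.
have sPQ : P \subset Q := sub_pcore_cent psubP.
have /andP[sQG pQ] : p.-subgroup(G) Q := pcore_subG_psubgroup 'C(P).
have ntQ : Q != 1 by apply: contraNneq ntP => Q1; rewrite -subG1 -Q1.
rewrite !inE groupP sQG pQ ntQ eqEsubset pcore_max ?normal_subnorm //=.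
set R := 'O_p(_); have psubR := pcore_subG_psubgroup 'N(Q); have /andP[sRG pR] := psubR.
have sQR : Q \subset R by rewrite pcore_max ?normal_subnorm.
apply: pcore_cent_max => //.
  by rewrite subsetI sRG (cent_psubgroup psubR) ?(subset_trans sPQ).
by rewrite (subset_trans _ (gFnorm _ _)) // subsetI subsetIl gFnorm.
Qed.

Lemma pcore_cent_id (a : {set gT}) : a \in Bp p G -> pcore_cent a = a.
Proof.
rewrite inE => /andP[/SpP[P [-> psubP _]] /eqP P_def].
apply/eqP; rewrite eqEsubset sub_pcore_cent // andbT {2}P_def.
by rewrite /pcore_cent -(pcore_setI_normal _ (subcent_normal G P)) subsetIl.
Qed.

Lemma pcore_centJ (P : {set gT}) g : g \in G -> pcore_cent (P :^ g) = pcore_cent P :^ g.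
Proof. by move=> gG; rewrite /pcore_cent centJ -{1}(conjGid gG) -conjIg pcoreJ. Qed.

End AbelianSylowRetraction.

Theorem proposition5p2 (gT : finGroupType) (G : {group gT}) (p : nat) :
  prime p -> p %| #|G| ->
  (forall P : {group gT}, P \in ('Syl_p(G))%g -> abelian P) ->
  strong_deformation_retract (@subset_le gT) (Sp p G) (Bp p G) /\
  equivariant_sdr (@subset_le gT) (Sp p G) (Bp p G) G (@conj_act gT).
Proof.
move=> _ _ abelian_Syl.
suff eqSDR : equivariant_sdr (@subset_le gT) (Sp p G) (Bp p G) G (@conj_act gT).
  by split=> //; apply: equivariant_sdr_sdr eqSDR.
apply: (inflationary_retraction_equivariant_sdr (r := pcore_cent G p)).
- by apply/subsetP=> x; rewrite inE => /andP[].
- by move=> _ /SpP[P [-> psubP ntP]]; apply: pcore_cent_Bp.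
- exact: pcore_cent_id.
- by move=> _ _ /SpP[P [-> _ _]] /SpP[Q [-> psubQ _]]; apply: pcore_cent_mono.
- by move=> _ /SpP[P [-> psubP _]]; apply: sub_pcore_cent.
- by move=> x g _ gG; apply: pcore_centJ.
Qed.
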